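(* For any solution $(w,F)\in X\times\mathbb R$ of the height equation, with $h=H+w$ and $\eta(q)=w(q,0)$, $$\frac1{F^2}\Big[\int_{-1}^0|\rho_p|\,w(0,p)^2\,dp+\rho(0)\eta(0)^2\Big]=\int_{-1}^0\frac{w_p(0,p)^2}{H_p(p)^2\,h_p(0,p)}\,dp.$$
   Context: Fix $\alpha\in(0,1)$, $\rho\in C^{2+\alpha}([-1,0])$ with $\rho>0$, $\rho_p\le0$, and $H\in C^{3+\alpha}([-1,0])$ with $H(-1)=0$, $H(0)=1$, $H_p>0$. Let $R=\mathbb R\times(-1,0)$ (coordinates $(q,p)$), $T=\mathbb R\times\{0\}$, $B=\mathbb R\times\{-1\}$. $(w,F)$ solves the height equation if $h=H+w$ satisfies $\big(-\frac{1+h_q^2}{2h_p^2}+\frac1{2H_p^2}\big)_p+\big(\frac{h_q}{h_p}\big)_q-\frac1{F^2}\rho_p(h-H)=0$ in $R$, $\frac{1+h_q^2}{2h_p^2}-\frac1{2H_p^2}+\frac1{F^2}\rho(h-1)=0$ on $T$, $h=0$ on $B$, and $0<\inf_R(H_p+w_p)<\infty$. $X$: $w\in C^{3+\alpha}(\overline R)$ of finite norm, even in $q$, with $w$ and derivatives of order $\le2$ tending to $0$ uniformly as $|q|\to\infty$, $w=0$ on $B$. *)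

From Stdlib Require Import Reals Lra List ClassicalEpsilon.
From Coquelicot Require Import Coquelicot.
Open Scope R_scope.

(** The closed interval [-1,0]; the closed strip  closure(R) = R x [-1,0]. *)
Definition Icl (p : R) : Prop := -1 <= p <= 0.

(** Derivative of g : R -> R at x relative to the closed interval [-1,0]
    (one-sided at the endpoints, ordinary in the interior). *)
Definition is_deriv_I (g : R -> R) (x l : R) : Prop :=
  filterlim (fun y => (g y - g x) / (y - x))
    (within (fun y => Icl y /\ y <> x) (locally x)) (locally l).
Definition ex_deriv_I (g : R -> R) (x : R) : Prop := exists l, is_deriv_I g x l.
Definition dI (g : R -> R) (x : R) : R :=
  epsilon (inhabits 0) (fun l => is_deriv_I g x l).
Fixpoint dIn (n : nat) (g : R -> R) : R -> R :=
  match n with O => g | S n' => dI (dIn n' g) end.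

Definition cont_I (g : R -> R) : Prop :=
  forall x, Icl x -> forall eps, 0 < eps -> exists del, 0 < del /\
    forall y, Icl y -> Rabs (y - x) < del -> Rabs (g y - g x) < eps.

Definition holder_I (a : R) (g : R -> R) : Prop :=
  exists C, forall x y, Icl x -> Icl y -> x <> y ->
    Rabs (g x - g y) <= C * Rpower (Rabs (x - y)) a.

Definition CkaI (k : nat) (a : R) (g : R -> R) : Prop :=
  (forall j, (j < k)%nat -> forall x, Icl x -> ex_deriv_I (dIn j g) x) /\
  (forall j, (j <= k)%nat -> cont_I (dIn j g)) /\
  holder_I a (dIn k g).

Definition dq (f : R -> R -> R) (q p : R) : R := Derive (fun x => f x p) q.
Definition dp (f : R -> R -> R) (q p : R) : R := dI (f q) p.
(** Iterated partial derivative along a word (true = d/dq, false = d/dp). *)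
Fixpoint Dw (s : list bool) (f : R -> R -> R) : R -> R -> R :=
  match s with
  | nil => f
  | b :: s' => if b then dq (Dw s' f) else dp (Dw s' f)
  end.

Definition cont_strip (f : R -> R -> R) : Prop :=
  forall q p, Icl p -> forall eps, 0 < eps -> exists del, 0 < del /\
    forall q' p', Icl p' -> Rabs (q' - q) < del -> Rabs (p' - p) < del ->
      Rabs (f q' p' - f q p) < eps.

Definition Cka_strip (k : nat) (a : R) (f : R -> R -> R) : Prop :=
  (forall s, (length s < k)%nat -> forall q p, Icl p ->
      ex_derive (fun x => Dw s f x p) q /\ ex_deriv_I (Dw s f q) p) /\
  (forall s, (length s <= k)%nat -> cont_strip (Dw s f)) /\
  (forall s, (length s <= k)%nat -> exists M, forall q p, Icl p ->
      Rabs (Dw s f q p) <= M) /\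
  (forall s, length s = k -> exists C, forall q p q' p', Icl p -> Icl p' ->
      (q, p) <> (q', p') ->
      Rabs (Dw s f q p - Dw s f q' p') <=
        C * Rpower (sqrt ((q - q') ^ 2 + (p - p') ^ 2)) a).

Definition inX (a : R) (w : R -> R -> R) : Prop :=
  Cka_strip 3 a w /\
  (forall q p, Icl p -> w (- q) p = w q p) /\
  (forall s, (length s <= 2)%nat -> forall eps, 0 < eps -> exists M,
      forall q p, Icl p -> M < Rabs q -> Rabs (Dw s w q p) < eps) /\
  (forall q, w q (-1) = 0).

Definition hfun (H : R -> R) (w : R -> R -> R) : R -> R -> R :=
  fun q p => H p + w q p.

Definition height_eq (rho H : R -> R) (w : R -> R -> R) (F : R) : Prop :=
  let h := hfun H w in
  let hq := dq h in
  let hp := dp h in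
  (forall q p, -1 < p < 0 ->
     dp (fun q p => - (1 + hq q p ^ 2) / (2 * hp q p ^ 2)
                    + 1 / (2 * dI H p ^ 2)) q p
     + dq (fun q p => hq q p / hp q p) q p
     - 1 / F ^ 2 * dI rho p * (h q p - H p) = 0) /\
  (forall q, (1 + hq q 0 ^ 2) / (2 * hp q 0 ^ 2) - 1 / (2 * dI H 0 ^ 2)
             + 1 / F ^ 2 * rho 0 * (h q 0 - 1) = 0) /\
  (forall q, h q (-1) = 0) /\
  (exists c, 0 < c /\ forall q p, -1 < p < 0 -> c <= dI H p + dp w q p).

(* The height equation is a conservation law in q for the flow force
     S(q) = int_{-1}^0 [(1 - w_q^2)/(2 h_p) + h_p/(2 H_p^2) + rho_p w^2/(2 F^2)] dp
            - rho(0) w(q,0)^2/(2 F^2):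
   differentiating under the integral, the q-derivative of the integrand is the
   p-derivative of w_q [-(1 + w_q^2)/(2 h_p^2) + 1/(2 H_p^2)] by the interior equation,
   and the boundary terms cancel by the Bernoulli condition on the top and w = 0 on
   the bottom, so S is constant.  Since w, w_q, w_p vanish as |q| -> oo, the constant
   is int 1/H_p.  At the crest q = 0 evenness gives w_q = 0, and the integrand minus
   1/H_p is w_p^2/(2 H_p^2 h_p) + rho_p w^2/(2 F^2), which yields the identity. *)

From Stdlib Require Import Reals Lra Lia List ClassicalEpsilon.
From Coquelicot Require Import Coquelicot.
Open Scope R_scope.

Lemma ball_R (x e y : R) : ball x e y <-> Rabs (y - x) < e.
Proof. reflexivity. Qed.

Lemma Icl_open p : -1 < p < 0 -> Icl p.
Proof. unfold Icl; lra. Qed.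

Lemma locally_open_Icl x : -1 < x < 0 -> locally x (fun t => -1 < t < 0).
Proof.
  intros Ix. apply (locally_interval _ x (-1) 0); simpl; [lra | lra |].
  intros y H1 H2; split; assumption.
Qed.

Lemma Icl_interior_near p d : Icl p -> 0 < d ->
  exists y, -1 < y < 0 /\ y <> p /\ Rabs (y - p) < d.
Proof.
  unfold Icl; intros Ip Hd. set (e := Rmin (d / 2) (1 / 4)).
  assert (0 < e) by (apply Rmin_glb_lt; lra).
  assert (e <= d / 2) by apply Rmin_l. assert (e <= 1 / 4) by apply Rmin_r.
  destruct (Rle_lt_dec p (-1 / 2)).
  - exists (p + e). rewrite Rabs_right; lra.
  - exists (p - e). rewrite Rabs_left; lra.
Qed.

(** * Derivatives relative to [-1,0] *)

Lemma is_deriv_I_eps g x l : is_deriv_I g x l <->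
  forall eps, 0 < eps -> exists del, 0 < del /\ forall y, Icl y -> y <> x ->
    Rabs (y - x) < del -> Rabs ((g y - g x) / (y - x) - l) < eps.
Proof.
  unfold is_deriv_I. rewrite filterlim_locally. split.
  - intros Hl eps He. destruct (Hl (mkposreal eps He)) as [d Hd].
    exists d; split; [apply cond_pos|]. intros y Iy Ny Hy. exact (Hd y Hy (conj Iy Ny)).
  - intros Hl eps. destruct (Hl eps (cond_pos eps)) as [d [Hd0 Hd]].
    exists (mkposreal d Hd0). intros y Hy [Iy Ny]. exact (Hd y Iy Ny Hy).
Qed.

Lemma is_deriv_I_eq g x l1 l2 : Icl x ->
  is_deriv_I g x l1 -> is_deriv_I g x l2 -> l1 = l2.
Proof.
  intros Ix H1 H2. rewrite is_deriv_I_eps in H1, H2.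
  destruct (Req_dec l1 l2) as [|Hn]; [assumption | exfalso].
  set (e := Rabs (l1 - l2) / 2).
  assert (He : 0 < e) by (apply Rdiv_lt_0_compat; [apply Rabs_pos_lt|]; lra).
  destruct (H1 e He) as [d1 [Hd1 P1]]. destruct (H2 e He) as [d2 [Hd2 P2]].
  destruct (Icl_interior_near x (Rmin d1 d2) Ix) as [y [Iy [Ny Hy]]].
  { apply Rmin_glb_lt; assumption. }
  assert (Rmin d1 d2 <= d1) by apply Rmin_l. assert (Rmin d1 d2 <= d2) by apply Rmin_r.
  specialize (P1 y (Icl_open y Iy) Ny ltac:(lra)).
  specialize (P2 y (Icl_open y Iy) Ny ltac:(lra)).
  set (z := (g y - g x) / (y - x)) in *.
  assert (Rabs (l1 - l2) <= Rabs (z - l1) + Rabs (z - l2)).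
  { replace (l1 - l2) with (- (z - l1) + (z - l2)) by ring.
    rewrite <- (Rabs_Ropp (z - l1)). apply Rabs_triang. }
  unfold e in *. lra.
Qed.

Lemma dI_correct g x : ex_deriv_I g x -> is_deriv_I g x (dI g x).
Proof. intros Hg. exact (epsilon_spec (inhabits 0) (is_deriv_I g x) Hg). Qed.

Lemma is_deriv_I_unique g x l : Icl x -> is_deriv_I g x l -> dI g x = l.
Proof. intros Ix Hl. apply (is_deriv_I_eq g x); [|apply dI_correct; exists l|]; assumption. Qed.

Lemma is_derive_deriv_I g x l : is_derive g x l -> is_deriv_I g x l.
Proof.
  rewrite is_derive_Reals, is_deriv_I_eps. intros Hd eps He.
  destruct (Hd eps He) as [d Hd']. exists d; split; [apply cond_pos|].
  intros y Iy Ny Hy. specialize (Hd' (y - x) ltac:(lra) Hy).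
  replace (x + (y - x)) with y in Hd' by ring. exact Hd'.
Qed.

Lemma is_deriv_I_derive g x l : -1 < x < 0 -> is_deriv_I g x l -> is_derive g x l.
Proof.
  rewrite is_derive_Reals, is_deriv_I_eps. intros Ix Hd eps He.
  destruct (Hd eps He) as [d [Hd0 Hd']]. destruct (locally_open_Icl x Ix) as [e He'].
  assert (Hm : 0 < Rmin d e) by (apply Rmin_glb_lt; [|apply cond_pos]; assumption).
  exists (mkposreal _ Hm). intros h Hh0 Hh; simpl in Hh.
  assert (Rmin d e <= d) by apply Rmin_l. assert (Rmin d e <= e) by apply Rmin_r.
  assert (Ih : -1 < x + h < 0) by (apply He'; rewrite ball_R; ring_simplify (x + h - x); lra).
  specialize (Hd' (x + h) (Icl_open _ Ih) ltac:(lra)).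
  replace (x + h - x) with h in Hd' by ring. apply Hd'. lra.
Qed.

Lemma is_derive_dI g x : -1 < x < 0 -> ex_deriv_I g x -> is_derive g x (dI g x).
Proof. intros Ix Hg. apply is_deriv_I_derive, dI_correct; assumption. Qed.

Lemma Derive_dI g x : -1 < x < 0 -> ex_deriv_I g x -> Derive g x = dI g x.
Proof. intros Ix Hg. apply is_derive_unique, is_derive_dI; assumption. Qed.

Lemma is_deriv_I_ext f g x l : (forall y, Icl y -> f y = g y) -> Icl x ->
  is_deriv_I g x l -> is_deriv_I f x l.
Proof.
  intros Hfg Ix. rewrite !is_deriv_I_eps. intros Hd eps He.
  destruct (Hd eps He) as [d [Hd0 Hd']]. exists d; split; [assumption|].
  intros y Iy Ny Hy. rewrite !Hfg by assumption. auto.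
Qed.

Lemma is_deriv_I_plus f g x l1 l2 : is_deriv_I f x l1 -> is_deriv_I g x l2 ->
  is_deriv_I (fun y => f y + g y) x (l1 + l2).
Proof.
  rewrite !is_deriv_I_eps. intros H1 H2 eps He.
  destruct (H1 (eps / 2) ltac:(lra)) as [d1 [Hd1 P1]].
  destruct (H2 (eps / 2) ltac:(lra)) as [d2 [Hd2 P2]].
  exists (Rmin d1 d2); split; [apply Rmin_glb_lt; assumption|].
  intros y Iy Ny Hy.
  assert (Rmin d1 d2 <= d1) by apply Rmin_l. assert (Rmin d1 d2 <= d2) by apply Rmin_r.
  specialize (P1 y Iy Ny ltac:(lra)). specialize (P2 y Iy Ny ltac:(lra)).
  replace ((f y + g y - (f x + g x)) / (y - x) - (l1 + l2)) with
    (((f y - f x) / (y - x) - l1) + ((g y - g x) / (y - x) - l2)) by (field; lra).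
  eapply Rle_lt_trans; [apply Rabs_triang | lra].
Qed.

(** * Continuity on [-1,0] and on the closed strip *)

(* Functions on [-1,0] are extended to R through [clamp], which makes
   Coquelicot's continuity, integration and 2d lemmas on R available. *)
Definition clamp (v : R) : R := Rmax (-1) (Rmin v 0).

Lemma clamp_Icl v : Icl (clamp v).
Proof. unfold clamp, Icl, Rmax, Rmin. repeat destruct Rle_dec; lra. Qed.

Lemma clamp_id v : Icl v -> clamp v = v.
Proof. unfold clamp, Icl, Rmax, Rmin. repeat destruct Rle_dec; lra. Qed.

Lemma clamp_lipschitz v y : Rabs (clamp v - clamp y) <= Rabs (v - y).
Proof.
  unfold clamp, Rmax, Rmin. repeat destruct Rle_dec; unfold Rabs; repeat destruct Rcase_abs; lra.
Qed.

Definition cont_clamped (f : R -> R -> R) : Prop :=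
  forall x y, continuity_2d_pt (fun u v => f u (clamp v)) x y.

Lemma cont_strip_clamped f : cont_strip f -> cont_clamped f.
Proof.
  intros Hf x y eps. destruct (Hf x (clamp y) (clamp_Icl y) eps (cond_pos eps)) as [d [Hd P]].
  exists (mkposreal d Hd). intros u v Hu Hv. apply P; [apply clamp_Icl | exact Hu |].
  eapply Rle_lt_trans; [apply clamp_lipschitz | exact Hv].
Qed.

Lemma cont_I_clamped (g : R -> R) : cont_I g -> cont_clamped (fun _ p => g p).
Proof.
  intros Hg x y eps. destruct (Hg (clamp y) (clamp_Icl y) eps (cond_pos eps)) as [d [Hd P]].
  exists (mkposreal d Hd). intros u v _ Hv. apply P; [apply clamp_Icl |].
  eapply Rle_lt_trans; [apply clamp_lipschitz | exact Hv].
Qed.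

Lemma cont_clamped_pt f q y : cont_clamped f -> continuity_pt (fun v => f q (clamp v)) y.
Proof.
  intros Hf eps He. destruct (Hf q y (mkposreal eps He)) as [d P].
  exists d; split; [apply cond_pos|]. intros v [_ Hv].
  apply P; [rewrite Rminus_eq_0, Rabs_R0; apply cond_pos | exact Hv].
Qed.

Lemma cont_clamped_I f q : cont_clamped f -> cont_I (f q).
Proof.
  intros Hf x Ix eps He. destruct (cont_clamped_pt f q x Hf eps He) as [d [Hd P]].
  exists d; split; [exact Hd|]. intros y Iy Hy.
  destruct (Req_dec y x) as [->|Ny]; [rewrite Rminus_eq_0, Rabs_R0; exact He|].
  specialize (P y (conj (conj I (not_eq_sym Ny)) Hy)). simpl in P.
  rewrite !clamp_id in P; assumption.
Qed.

Lemma cont_I_clamp_pt g y : cont_I g -> continuity_pt (fun v => g (clamp v)) y.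
Proof. intros Hg. apply (cont_clamped_pt (fun _ p => g p) 0), cont_I_clamped, Hg. Qed.

Lemma cont_strip_I f q : cont_strip f -> cont_I (f q).
Proof.
  intros Hf x Ix eps He. destruct (Hf q x Ix eps He) as [d [Hd P]].
  exists d; split; [exact Hd|]. intros y Iy Hy.
  apply P; [exact Iy | rewrite Rminus_eq_0, Rabs_R0; exact Hd | exact Hy].
Qed.

Lemma cont_strip_2d_pt f q p : cont_strip f -> -1 < p < 0 -> continuity_2d_pt f q p.
Proof.
  intros Hf Ip eps. destruct (Hf q p (Icl_open p Ip) eps (cond_pos eps)) as [d [Hd P]].
  destruct (locally_open_Icl p Ip) as [e He].
  assert (Hm : 0 < Rmin d e) by (apply Rmin_glb_lt; [|apply cond_pos]; assumption).
  exists (mkposreal _ Hm). simpl. intros u v Hu Hv.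
  assert (Rmin d e <= d) by apply Rmin_l. assert (Rmin d e <= e) by apply Rmin_r.
  apply P; [apply Icl_open, He; rewrite ball_R | |]; lra.
Qed.

Lemma cont_I_plus f g : cont_I f -> cont_I g -> cont_I (fun p => f p + g p).
Proof.
  intros Hf Hg x Ix eps He.
  destruct (Hf x Ix (eps / 2) ltac:(lra)) as [d1 [Hd1 P1]].
  destruct (Hg x Ix (eps / 2) ltac:(lra)) as [d2 [Hd2 P2]].
  exists (Rmin d1 d2); split; [apply Rmin_glb_lt; assumption|]. intros y Iy Hy.
  assert (Rmin d1 d2 <= d1) by apply Rmin_l. assert (Rmin d1 d2 <= d2) by apply Rmin_r.
  specialize (P1 y Iy ltac:(lra)). specialize (P2 y Iy ltac:(lra)).
  replace (f y + g y - (f x + g x)) with ((f y - f x) + (g y - g x)) by ring.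
  eapply Rle_lt_trans; [apply Rabs_triang | lra].
Qed.

Lemma cont_I_lb (g : R -> R) c : cont_I g -> (forall y, -1 < y < 0 -> c <= g y) ->
  forall p, Icl p -> c <= g p.
Proof.
  intros Hg Hc p Ip. destruct (Rle_lt_dec c (g p)) as [|Hlt]; [assumption | exfalso].
  destruct (Hg p Ip (c - g p) ltac:(lra)) as [d [Hd P]].
  destruct (Icl_interior_near p d Ip Hd) as [y [Iy [_ Hy]]].
  specialize (P y (Icl_open y Iy) Hy). specialize (Hc y Iy).
  assert (Hr := Rle_abs (g y - g p)). lra.
Qed.

Lemma cont_I_bounded (g : R -> R) : cont_I g -> exists M, forall p, Icl p -> Rabs (g p) <= M.
Proof.
  intros Hg. destruct (continuity_ab_maj (fun v => Rabs (g (clamp v))) (-1) 0) as [Mx [HM _]].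
  - lra.
  - intros x _. apply (continuity_pt_comp (fun v => g (clamp v)) Rabs).
    + apply cont_I_clamp_pt, Hg.
    + apply Rcontinuity_abs.
  - exists (Rabs (g (clamp Mx))). intros p Ip. specialize (HM p Ip). rewrite clamp_id in HM; assumption.
Qed.

Lemma c2d_minus f g x y : continuity_2d_pt f x y -> continuity_2d_pt g x y ->
  continuity_2d_pt (fun u v => f u v - g u v) x y.
Proof. intros. apply continuity_2d_pt_plus; [|apply continuity_2d_pt_opp]; assumption. Qed.

Lemma c2d_div f g x y : continuity_2d_pt f x y -> continuity_2d_pt g x y -> g x y <> 0 ->
  continuity_2d_pt (fun u v => f u v / g u v) x y.
Proof. intros. apply continuity_2d_pt_mult; [|apply continuity_2d_pt_inv]; assumption. Qed.

Lemma c2d_pow f x y n : continuity_2d_pt f x y -> continuity_2d_pt (fun u v => f u v ^ n) x y.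
Proof.
  intros Hf. induction n as [|n IH]; simpl.
  - apply continuity_2d_pt_const.
  - apply continuity_2d_pt_mult; assumption.
Qed.

Ltac c2d := repeat first [
  apply c2d_div | apply c2d_minus | apply continuity_2d_pt_plus | apply continuity_2d_pt_mult
  | apply continuity_2d_pt_opp | apply c2d_pow | apply continuity_2d_pt_const
  | match goal with Hc : forall x y, continuity_2d_pt _ x y |- _ => apply Hc end ].

(** * Integrals over [-1,0] *)

Lemma ex_RInt_clamp g a b : cont_I g -> ex_RInt (fun v => g (clamp v)) a b.
Proof.
  intros Hg. apply (@ex_RInt_continuous R_CompleteNormedModule). intros z _.
  apply continuity_pt_filterlim, cont_I_clamp_pt, Hg.
Qed.

Lemma RInt_clamp (g : R -> R) : RInt (fun t => g (clamp t)) (-1) 0 = RInt g (-1) 0.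
Proof.
  apply RInt_ext. intros x Hx. rewrite Rmin_left, Rmax_right in Hx by lra.
  rewrite clamp_id; [reflexivity | apply Icl_open, Hx].
Qed.


Lemma ex_RInt_Icl_ext (f g : R -> R) : (forall p, Icl p -> f p = g p) ->
  ex_RInt g (-1) 0 -> ex_RInt f (-1) 0.
Proof.
  intros Hfg. apply ex_RInt_ext. intros p Ip. rewrite Rmin_left, Rmax_right in Ip by lra.
  symmetry. apply Hfg, Icl_open, Ip.
Qed.

Lemma ex_RInt_cont_I g : cont_I g -> ex_RInt g (-1) 0.
Proof.
  intros Hg. apply (ex_RInt_Icl_ext _ (fun v => g (clamp v))); [|apply ex_RInt_clamp, Hg].
  intros x Ix. rewrite clamp_id by exact Ix. reflexivity.
Qed.

Lemma RInt_scal_minus (f g : R -> R) a b x y : ex_RInt f a b -> ex_RInt g a b ->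
  RInt (fun t => x * f t - y * g t) a b = x * RInt f a b - y * RInt g a b.
Proof.
  intros Hf Hg.
  transitivity (RInt (fun t => x * f t) a b - RInt (fun t => y * g t) a b).
  - exact (RInt_minus _ _ a b (ex_RInt_scal f a b x Hf) (ex_RInt_scal g a b y Hg)).
  - f_equal; [exact (RInt_scal f a b x Hf) | exact (RInt_scal g a b y Hg)].
Qed.

Lemma RInt_is_derive_I (G g : R -> R) : (forall x, -1 < x < 0 -> is_derive G x (g x)) ->
  cont_I G -> cont_I g -> RInt g (-1) 0 = G 0 - G (-1).
Proof.
  intros HD HG Hg. set (Phi := fun y => RInt (fun v => g (clamp v)) (-1) y).
  assert (HPhi : forall y, is_derive Phi y (g (clamp y))).
  { intros y. apply (is_derive_RInt (fun v => g (clamp v)) Phi (-1) y).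
    - apply filter_forall. intros b. apply (@RInt_correct R_CompleteNormedModule), ex_RInt_clamp, Hg.
    - apply continuity_pt_filterlim, cont_I_clamp_pt, Hg. }
  destruct (MVT_gen (fun y => G (clamp y) - Phi y) (-1) 0 (fun _ => 0)) as [c [_ Hc]];
    rewrite ?Rmin_left, ?Rmax_right by lra.
  - intros x Ix. replace 0 with (g x - g (clamp x)) by (rewrite clamp_id by (apply Icl_open, Ix); ring).
    apply (is_derive_minus (fun y => G (clamp y)) Phi); [|apply HPhi].
    apply (is_derive_ext_loc G); [|apply HD, Ix].
    generalize (locally_open_Icl x Ix). apply filter_imp. intros t Ht. rewrite clamp_id; [reflexivity | apply Icl_open, Ht].
  - intros x _. apply continuity_pt_minus; [apply cont_I_clamp_pt, HG|].
    apply continuity_pt_filterlim, (@ex_derive_continuous R_AbsRing R_NormedModule). eexists; apply HPhi.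
  - rewrite !clamp_id in Hc by (unfold Icl; lra).
    assert (Phi (-1) = 0) by apply (@RInt_point R_CompleteNormedModule).
    assert (RInt g (-1) 0 = Phi 0) by (symmetry; apply RInt_clamp).
    lra.
Qed.

Lemma is_derive_RInt_param_I (f df : R -> R -> R) q :
  (forall u p, Icl p -> is_derive (fun z => f z p) u (df u p)) ->
  cont_clamped f -> cont_clamped df ->
  is_derive (fun x => RInt (f x) (-1) 0) q (RInt (df q) (-1) 0).
Proof.
  intros HD Cf Cdf.
  assert (HDc : forall u t, is_derive (fun z => f z (clamp t)) u (df u (clamp t)))
    by (intros; apply HD, clamp_Icl).
  apply (is_derive_ext (fun x => RInt (fun t => f x (clamp t)) (-1) 0)); [intros; apply RInt_clamp|].
  rewrite <- RInt_clamp.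
  rewrite (RInt_ext (fun t => df q (clamp t)) (fun t => Derive (fun u => f u (clamp t)) q))
    by (intros; symmetry; apply is_derive_unique, HDc).
  apply (is_derive_RInt_param (fun u t => f u (clamp t))).
  - apply filter_forall. intros x t _. eexists. apply HDc.
  - intros t _. apply (continuity_2d_pt_ext (fun u v => df u (clamp v))); [|apply Cdf].
    intros; symmetry; apply is_derive_unique, HDc.
  - apply filter_forall. intros y. apply ex_RInt_clamp, cont_clamped_I, Cf.
Qed.

Lemma is_derive_0_const (S : R -> R) : (forall x, is_derive S x 0) -> forall a b, S a = S b.
Proof.
  intros HS a b. destruct (MVT_gen S a b (fun _ => 0)) as [c [_ Hc]].
  - intros; apply HS.
  - intros x _. apply continuity_pt_filterlim, (@ex_derive_continuous R_AbsRing R_NormedModule).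
    eexists; apply HS.
  - lra.
Qed.

Lemma Derive_even_0 (f : R -> R) : (forall x, f (- x) = f x) -> ex_derive f 0 -> Derive f 0 = 0.
Proof.
  intros Hev Hd.
  assert (H2 : is_derive (fun x => f (- x)) 0 (- Derive f 0)).
  { auto_derive; rewrite Ropp_0; [assumption|].
    change (Derive (fun x => f x) 0) with (Derive f 0). ring. }
  apply (is_derive_ext _ f) in H2; [|intros; apply Hev].
  apply is_derive_unique in H2. lra.
Qed.

Lemma eq_0_of_small_bound x K d0 : 0 < d0 ->
  (forall d, 0 < d -> d <= d0 -> Rabs x <= d * K) -> x = 0.
Proof.
  intros Hd0 Hx. assert (HK : 0 <= K).
  { specialize (Hx d0 Hd0 (Rle_refl _)). assert (Ha := Rabs_pos x). nra. }
  apply Rabs_eq_0, Rle_antisym; [|apply Rabs_pos]. apply le_epsilon. intros eps He.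
  set (d := Rmin d0 (eps / (K + 1))).
  assert (Hd : 0 < d) by (apply Rmin_glb_lt; [|apply Rdiv_lt_0_compat]; lra).
  assert (d <= d0) by apply Rmin_l. assert (Hde : d <= eps / (K + 1)) by apply Rmin_r.
  specialize (Hx d Hd ltac:(assumption)).
  assert (d * (K + 1) <= eps) by (apply (Rmult_le_compat_r (K + 1)) in Hde; [field_simplify in Hde|]; lra).
  nra.
Qed.

(** * The flow force density *)

(* [Hp], [wq], [wp], [rp], [wv] stand for H_p, w_q, w_p, rho_p and w at a point;
   [(Hp + wp)] is h_p. *)
Definition flow_density (F Hp wq wp rp wv : R) : R :=
  (1 - wq ^ 2) / (2 * (Hp + wp)) + (Hp + wp) / (2 * Hp ^ 2) + rp * wv ^ 2 / (2 * F ^ 2).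

Lemma flow_density_sub_inv F Hp wq wp rp wv : F <> 0 -> 0 < Hp -> Hp + wp <> 0 ->
  flow_density F Hp wq wp rp wv - 1 / Hp =
  wp ^ 2 / (2 * (Hp ^ 2 * (Hp + wp))) - wq ^ 2 / (2 * (Hp + wp)) + rp * wv ^ 2 / (2 * F ^ 2).
Proof. intros. unfold flow_density. field. repeat split; lra. Qed.

Lemma flow_density_sub_inv_bound F c M d Hp wq wp rp wv : F <> 0 -> 0 < c ->
  c <= Hp + wp -> Rabs wp <= d -> d <= c / 2 -> Rabs wq <= d -> Rabs wv <= d -> Rabs rp <= M ->
  Rabs (flow_density F Hp wq wp rp wv - 1 / Hp) <=
  d ^ 2 * (2 / c ^ 3 + 1 / (2 * c) + M / (2 * F ^ 2)).
Proof.
  intros HF Hc Hh Hwp Hd Hwq Hwv Hrp.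
  assert (HHp : c / 2 <= Hp) by (assert (Hb := Rle_abs wp); lra).
  rewrite flow_density_sub_inv by lra.
  assert (Hwp2 := pow_maj_Rabs _ _ 2 Hwp). assert (Hwq2 := pow_maj_Rabs _ _ 2 Hwq).
  assert (Hwv2 := pow_maj_Rabs _ _ 2 Hwv).
  assert (F2 : 0 < F ^ 2) by (apply pow2_gt_0; exact HF).
  assert (T1 : 0 <= wp ^ 2 / (2 * (Hp ^ 2 * (Hp + wp))) <= d ^ 2 * (2 / c ^ 3)).
  { assert (Hden : c ^ 3 / 2 <= 2 * (Hp ^ 2 * (Hp + wp))).
    { assert ((c / 2) ^ 2 <= Hp ^ 2) by (apply pow_incr; lra).
      assert (0 <= (c / 2) ^ 2) by apply pow2_ge_0. nra. }
    assert (0 < c ^ 3) by (apply pow_lt; lra).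
    split; [apply Rdiv_le_0_compat; [apply pow2_ge_0 | lra]|].
    apply Rle_trans with (d ^ 2 / (c ^ 3 / 2)); [|right; field; lra].
    unfold Rdiv. apply Rmult_le_compat; [apply pow2_ge_0 | left; apply Rinv_0_lt_compat; lra
      | exact Hwp2 | apply Rinv_le_contravar; lra]. }
  assert (T2 : 0 <= wq ^ 2 / (2 * (Hp + wp)) <= d ^ 2 * (1 / (2 * c))).
  { split; [apply Rdiv_le_0_compat; [apply pow2_ge_0 | lra]|].
    apply Rle_trans with (d ^ 2 / (2 * c)); [|right; field; lra].
    unfold Rdiv. apply Rmult_le_compat; [apply pow2_ge_0 | left; apply Rinv_0_lt_compat; lra
      | exact Hwq2 | apply Rinv_le_contravar; lra]. }
  assert (T3 : Rabs (rp * wv ^ 2 / (2 * F ^ 2)) <= d ^ 2 * (M / (2 * F ^ 2))).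
  { unfold Rdiv. rewrite !Rabs_mult, (Rabs_right (wv ^ 2)) by (apply Rle_ge, pow2_ge_0).
    rewrite (Rabs_right (/ (2 * F ^ 2))) by (apply Rle_ge; left; apply Rinv_0_lt_compat; lra).
    replace (d ^ 2 * (M * / (2 * F ^ 2))) with (M * d ^ 2 * / (2 * F ^ 2)) by ring.
    apply Rmult_le_compat_r; [left; apply Rinv_0_lt_compat; lra|].
    apply Rmult_le_compat; [apply Rabs_pos | apply pow2_ge_0 | exact Hrp | exact Hwv2]. }
  eapply Rle_trans; [apply Rabs_triang|].
  assert (Rabs (wp ^ 2 / (2 * (Hp ^ 2 * (Hp + wp))) - wq ^ 2 / (2 * (Hp + wp)))
          <= d ^ 2 * (2 / c ^ 3) + d ^ 2 * (1 / (2 * c))) by (apply Rabs_le; lra).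
  lra.
Qed.

(** * Conservation of the flow force *)

Record regular (H : R -> R) (w : R -> R -> R) : Prop := {
  ex_dq_w : forall q p, Icl p -> ex_derive (fun x => w x p) q;
  ex_dq_wq : forall q p, Icl p -> ex_derive (fun x => dq w x p) q;
  ex_dq_wp : forall q p, Icl p -> ex_derive (fun x => dp w x p) q;
  ex_dp_w : forall q p, Icl p -> ex_deriv_I (w q) p;
  ex_dp_wq : forall q p, Icl p -> ex_deriv_I (dq w q) p;
  ex_dp_wp : forall q p, Icl p -> ex_deriv_I (dp w q) p;
  cont_w : cont_strip w;
  cont_wq : cont_strip (dq w);
  cont_wp : cont_strip (dp w);
  cont_wqq : cont_strip (dq (dq w));
  cont_wqp : cont_strip (dq (dp w));
  cont_wpq : cont_strip (dp (dq w));
  ex_dI_H : forall p, Icl p -> ex_deriv_I H p;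
  ex_dI_Hp : forall p, Icl p -> ex_deriv_I (dI H) p;
  cont_Hp : cont_I (dI H);
  Hp_pos : forall p, Icl p -> 0 < dI H p
}.

Definition decays (w : R -> R -> R) : Prop :=
  forall eps, 0 < eps -> exists M, forall q p, Icl p -> M < Rabs q ->
    Rabs (w q p) < eps /\ Rabs (dq w q p) < eps /\ Rabs (dp w q p) < eps.

Section FlowForce.

Variables (rho H : R -> R) (w : R -> R -> R) (F c : R).
Hypothesis reg : regular H w.
Hypothesis cont_rho_p : cont_I (dI rho).
Hypothesis F_neq0 : F <> 0.
Hypothesis c_pos : 0 < c.

Definition hp (q p : R) : R := dI H p + dp w q p.

Lemma hp_lb_of_interior : (forall q p, -1 < p < 0 -> c <= dI H p + dp w q p) ->
  forall q p, Icl p -> c <= hp q p.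
Proof.
  intros Hc q. apply (cont_I_lb (hp q)); [|exact (Hc q)].
  apply cont_I_plus; [apply (cont_Hp _ _ reg) | apply cont_strip_I, (cont_wp _ _ reg)].
Qed.

Hypothesis hp_lb : forall q p, Icl p -> c <= hp q p.
Hypothesis height : height_eq rho H w F.
Hypothesis H_top : H 0 = 1.
Hypothesis w_bot : forall q, w q (-1) = 0.

Definition density (q p : R) : R :=
  flow_density F (dI H p) (dq w q p) (dp w q p) (dI rho p) (w q p).

Definition dq_density (q p : R) : R :=
  - dq w q p * dq (dq w) q p / hp q p - (1 - dq w q p ^ 2) * dq (dp w) q p / (2 * hp q p ^ 2)
  + dq (dp w) q p / (2 * dI H p ^ 2) + dI rho p * w q p * dq w q p / F ^ 2.

(* The expression differentiated in p in the height equation, written in terms of w. *)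
Definition pflux (q p : R) : R := - (1 + dq w q p ^ 2) / (2 * hp q p ^ 2) + 1 / (2 * dI H p ^ 2).

Definition vflux (q p : R) : R := dq w q p * pflux q p.

Definition flow_force (q : R) : R := RInt (density q) (-1) 0 - rho 0 * w q 0 ^ 2 / (2 * F ^ 2).

Lemma hp_neq0 q p : Icl p -> hp q p <> 0.
Proof. intros Ip. specialize (hp_lb q p Ip). lra. Qed.

Lemma Hp_neq0 p : Icl p -> dI H p <> 0.
Proof. intros Ip. specialize (Hp_pos _ _ reg p Ip). lra. Qed.

Lemma dq_hfun q p : Icl p -> dq (hfun H w) q p = dq w q p.
Proof.
  intros Ip. unfold dq, hfun. rewrite Derive_plus, Derive_const; [ring | apply ex_derive_const |].
  apply (ex_dq_w _ _ reg), Ip.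
Qed.

Lemma dp_hfun q p : Icl p -> dp (hfun H w) q p = hp q p.
Proof.
  intros Ip. apply is_deriv_I_unique; [exact Ip|].
  apply (is_deriv_I_plus H (w q)); apply dI_correct; [apply (ex_dI_H _ _ reg) | apply (ex_dp_w _ _ reg)]; exact Ip.
Qed.

Ltac clamped_context :=
  pose proof (cont_strip_clamped _ (cont_w _ _ reg));
  pose proof (cont_strip_clamped _ (cont_wq _ _ reg));
  pose proof (cont_strip_clamped _ (cont_wp _ _ reg));
  pose proof (cont_strip_clamped _ (cont_wqq _ _ reg));
  pose proof (cont_strip_clamped _ (cont_wqp _ _ reg));
  pose proof (cont_I_clamped _ (cont_Hp _ _ reg));
  pose proof (cont_I_clamped _ cont_rho_p);
  unfold cont_clamped in *.

Ltac nonzero_denominators :=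
  repeat apply Rmult_integral_contrapositive_currified; try apply pow_nonzero; try lra;
  match goal with |- context [clamp ?y] =>
    solve [apply Hp_neq0, clamp_Icl | apply (hp_neq0 _ (clamp y)), clamp_Icl] end.

Lemma cont_clamped_density : cont_clamped density.
Proof. clamped_context. intros x y. unfold density, flow_density. c2d; nonzero_denominators. Qed.

Lemma cont_clamped_dq_density : cont_clamped dq_density.
Proof. clamped_context. intros x y. unfold dq_density. c2d; nonzero_denominators. Qed.

Lemma cont_clamped_vflux : cont_clamped vflux.
Proof. clamped_context. intros x y. unfold vflux, pflux. c2d; nonzero_denominators. Qed.

Lemma is_derive_density q p : Icl p -> is_derive (fun x => density x p) q (dq_density q p).
Proof.
  intros Ip. assert (Hh := hp_neq0 q p Ip). assert (HH := Hp_neq0 p Ip).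
  unfold density, flow_density, dq_density, hp in *. auto_derive.
  - repeat apply conj; try exact I;
      [apply (ex_dq_wq _ _ reg) | apply (ex_dq_wp _ _ reg) | lra
      | apply (ex_dq_wp _ _ reg) | apply (ex_dq_w _ _ reg)]; exact Ip.
  - change (Derive (fun x => dq w x p) q) with (dq (dq w) q p).
    change (Derive (fun x => dp w x p) q) with (dq (dp w) q p).
    change (Derive (fun x => w x p) q) with (dq w q p). field; repeat split; assumption.
Qed.

Lemma locally_2d_open_strip (P : R -> R -> Prop) q p : -1 < p < 0 ->
  (forall u v, -1 < v < 0 -> P u v) -> locally_2d P q p.
Proof. intros Ip HP. destruct (locally_open_Icl p Ip) as [e He]. exists e. intros u v _ Hv. apply HP, He, Hv. Qed.

Lemma dq_dp_w q p : -1 < p < 0 -> dq (dp w) q p = dp (dq w) q p.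
Proof.
  intros Ip.
  assert (E1 : forall z v, -1 < v < 0 -> Derive (fun t => w z t) v = dp w z v)
    by (intros z v Iv; apply Derive_dI, (ex_dp_w _ _ reg), Icl_open; exact Iv).
  assert (E2 : forall u v, -1 < v < 0 -> Derive (fun z => Derive (fun t => w z t) v) u = dq (dp w) u v)
    by (intros u v Iv; apply Derive_ext; intros; apply E1, Iv).
  assert (E3 : forall u v, -1 < v < 0 -> Derive (fun z => Derive (fun t => w t z) u) v = dp (dq w) u v)
    by (intros u v Iv; apply Derive_dI, (ex_dp_wq _ _ reg), Icl_open; exact Iv).
  rewrite <- E2, <- E3 by exact Ip. apply Schwarz.
  - apply locally_2d_open_strip; [exact Ip|]. intros u v Iv. assert (Iv' := Icl_open v Iv).
    repeat split.
    + apply (ex_dq_w _ _ reg), Iv'.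
    + eexists. apply is_derive_dI, (ex_dp_w _ _ reg), Iv'. exact Iv.
    + apply (ex_derive_ext (fun z => dp w z v)); [intros; rewrite E1 by exact Iv; reflexivity|].
      apply (ex_dq_wp _ _ reg), Iv'.
    + eexists. apply is_derive_dI, (ex_dp_wq _ _ reg), Iv'. exact Iv.
  - apply (continuity_2d_pt_ext_loc (dq (dp w))).
    + apply locally_2d_open_strip; [exact Ip|]. intros; symmetry; apply E2; assumption.
    + apply cont_strip_2d_pt; [apply (cont_wqp _ _ reg) | exact Ip].
  - apply (continuity_2d_pt_ext_loc (dp (dq w))).
    + apply locally_2d_open_strip; [exact Ip|]. intros; symmetry; apply E3; assumption.
    + apply cont_strip_2d_pt; [apply (cont_wpq _ _ reg) | exact Ip].
Qed.

Lemma ex_derive_pflux q p : -1 < p < 0 -> ex_derive (pflux q) p.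
Proof.
  intros Ip. assert (Ip' := Icl_open p Ip).
  assert (Hh := hp_neq0 q p Ip'). assert (HH := Hp_neq0 p Ip').
  unfold pflux, hp in *. auto_derive.
  repeat apply conj; try exact I;
    try (rewrite ?Rmult_1_r; repeat apply Rmult_integral_contrapositive_currified; lra);
    (eexists; apply is_derive_dI; [exact Ip|]);
    [apply (ex_dp_wq _ _ reg) | apply (ex_dI_Hp _ _ reg) | apply (ex_dp_wp _ _ reg)
    | apply (ex_dI_Hp _ _ reg)]; exact Ip'.
Qed.

Lemma is_derive_hp_q q p : Icl p -> is_derive (fun x => hp x p) q (dq (dp w) q p).
Proof.
  intros Ip. unfold hp. auto_derive; [apply (ex_dq_wp _ _ reg), Ip | unfold dq; ring].
Qed.

Lemma is_derive_wq_div_hp q p : Icl p ->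
  is_derive (fun x => dq w x p / hp x p) q
    ((dq (dq w) q p * hp q p - dq w q p * dq (dp w) q p) / hp q p ^ 2).
Proof.
  intros Ip. apply (is_derive_div (fun x => dq w x p) (fun x => hp x p)); [|apply is_derive_hp_q, Ip | apply hp_neq0, Ip].
  exact (Derive_correct (fun x => dq w x p) q (ex_dq_wq _ _ reg q p Ip)).
Qed.

(* The interior equation, after [h_q = w_q], [h_p = hp] and [h - H = w]. *)
Lemma Derive_pflux q p : -1 < p < 0 ->
  Derive (pflux q) p = - ((dq (dq w) q p * hp q p - dq w q p * dq (dp w) q p) / hp q p ^ 2)
                       + dI rho p * w q p / F ^ 2.
Proof.
  intros Ip. assert (Ip' := Icl_open p Ip).
  destruct height as [PDE _]. specialize (PDE q p Ip). cbv zeta in PDE.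
  assert (T1 : dp (fun q p => - (1 + dq (hfun H w) q p ^ 2) / (2 * dp (hfun H w) q p ^ 2)
                 + 1 / (2 * dI H p ^ 2)) q p = Derive (pflux q) p).
  { apply is_deriv_I_unique; [exact Ip'|]. apply (is_deriv_I_ext _ (pflux q)); [|exact Ip'|].
    - intros y Iy. unfold pflux. rewrite dq_hfun, dp_hfun by exact Iy. reflexivity.
    - apply is_derive_deriv_I, Derive_correct, ex_derive_pflux, Ip. }
  assert (T2 : dq (fun q p => dq (hfun H w) q p / dp (hfun H w) q p) q p =
               (dq (dq w) q p * hp q p - dq w q p * dq (dp w) q p) / hp q p ^ 2).
  { unfold dq at 1. rewrite (Derive_ext _ (fun x => dq w x p / hp x p)).
    - apply is_derive_unique, is_derive_wq_div_hp, Ip'.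
    - intros t. rewrite dq_hfun, dp_hfun by exact Ip'. reflexivity. }
  assert (T3 : hfun H w q p - H p = w q p) by (unfold hfun; ring).
  rewrite T1, T2, T3 in PDE.
  replace (dI rho p * w q p / F ^ 2) with (1 / F ^ 2 * dI rho p * w q p) by (field; exact F_neq0).
  lra.
Qed.

Lemma is_derive_vflux q p : -1 < p < 0 -> is_derive (vflux q) p (dq_density q p).
Proof.
  intros Ip. assert (Ip' := Icl_open p Ip).
  assert (Hh := hp_neq0 q p Ip'). assert (HH := Hp_neq0 p Ip').
  assert (Dwq : is_derive (dq w q) p (dq (dp w) q p)).
  { rewrite dq_dp_w by exact Ip. apply is_derive_dI; [exact Ip | apply (ex_dp_wq _ _ reg), Ip']. }
  assert (Dpf := Derive_correct _ _ (ex_derive_pflux q p Ip)).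
  assert (Dvf := is_derive_mult _ _ p _ _ Dwq Dpf Rmult_comm).
  replace (dq_density q p) with (dq (dp w) q p * pflux q p + dq w q p * Derive (pflux q) p);
    [exact Dvf|].
  rewrite Derive_pflux by exact Ip. unfold dq_density, pflux. field. repeat split; assumption.
Qed.

Lemma vflux_bot q : vflux q (-1) = 0.
Proof.
  unfold vflux, dq. rewrite (Derive_ext _ (fun _ => 0)) by (intros; apply w_bot).
  rewrite Derive_const. ring.
Qed.

(* The dynamic boundary condition evaluates [pflux] at the free surface. *)
Lemma vflux_top q : vflux q 0 = rho 0 * w q 0 * dq w q 0 / F ^ 2.
Proof.
  assert (I0 : Icl 0) by (unfold Icl; lra).
  destruct height as [_ [BC _]]. specialize (BC q). cbv zeta in BC.
  rewrite dq_hfun, dp_hfun in BC by exact I0.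
  unfold hfun in BC. rewrite H_top in BC. replace (1 + w q 0 - 1) with (w q 0) in BC by ring.
  unfold vflux, pflux.
  replace (- (1 + dq w q 0 ^ 2) / (2 * hp q 0 ^ 2) + 1 / (2 * dI H 0 ^ 2)) with (1 / F ^ 2 * rho 0 * w q 0)
    by (unfold Rdiv in *; lra).
  field. exact F_neq0.
Qed.

Lemma cont_clamped_inv_Hp : cont_clamped (fun _ p => 1 / dI H p).
Proof. clamped_context. intros x y. c2d; nonzero_denominators. Qed.

Lemma ex_RInt_density q : ex_RInt (density q) (-1) 0.
Proof. apply ex_RInt_cont_I, cont_clamped_I, cont_clamped_density. Qed.

Lemma ex_RInt_inv_Hp : ex_RInt (fun p => 1 / dI H p) (-1) 0.
Proof. exact (ex_RInt_cont_I _ (cont_clamped_I _ 0 cont_clamped_inv_Hp)). Qed.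

Lemma is_derive_flow_force q : is_derive flow_force q 0.
Proof.
  assert (I0 : Icl 0) by (unfold Icl; lra).
  assert (Dint := is_derive_RInt_param_I density dq_density q is_derive_density
                    cont_clamped_density cont_clamped_dq_density).
  assert (FTC : RInt (dq_density q) (-1) 0 = vflux q 0 - vflux q (-1)).
  { apply RInt_is_derive_I; [apply is_derive_vflux | apply cont_clamped_I, cont_clamped_vflux
                             | apply cont_clamped_I, cont_clamped_dq_density]. }
  rewrite vflux_bot, vflux_top in FTC.
  replace 0 with (RInt (dq_density q) (-1) 0 - rho 0 * (2 * w q 0 * dq w q 0) / (2 * F ^ 2))
    by (rewrite FTC; field; exact F_neq0).
  apply (is_derive_minus (fun x => RInt (density x) (-1) 0)); [exact Dint|].
  auto_derive; [apply (ex_dq_w _ _ reg), I0|]. unfold dq. field. exact F_neq0.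
Qed.

Lemma RInt_density_sub_inv_bound q M d : (forall p, Icl p -> Rabs (dI rho p) <= M) ->
  d <= c / 2 -> (forall p, Icl p -> Rabs (w q p) <= d /\ Rabs (dq w q p) <= d /\ Rabs (dp w q p) <= d) ->
  Rabs (RInt (density q) (-1) 0 - RInt (fun p => 1 / dI H p) (-1) 0) <=
  d ^ 2 * (2 / c ^ 3 + 1 / (2 * c) + M / (2 * F ^ 2)).
Proof.
  intros HM Hdc Hsmall.
  assert (Hsplit : RInt (fun p => density q p - 1 / dI H p) (-1) 0 =
                   RInt (density q) (-1) 0 - RInt (fun p => 1 / dI H p) (-1) 0)
    by exact (RInt_minus _ _ _ _ (ex_RInt_density q) ex_RInt_inv_Hp).
  rewrite <- Hsplit. eapply Rle_trans.
  - apply abs_RInt_le_const; [lra | apply (@ex_RInt_minus R_NormedModule);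
                                    [apply ex_RInt_density | apply ex_RInt_inv_Hp] |].
    intros p Ip. destruct (Hsmall p Ip) as [Hw [Hwq Hwp]].
    apply (flow_density_sub_inv_bound F c M d);
      [exact F_neq0 | exact c_pos | apply hp_lb, Ip | lra | lra | lra | lra | apply HM, Ip].
  - lra.
Qed.

Lemma flow_force_near_trivial M d : decays w -> (forall p, Icl p -> Rabs (dI rho p) <= M) ->
  0 < d -> d <= c / 2 -> exists q, Rabs (flow_force q - RInt (fun p => 1 / dI H p) (-1) 0) <=
    d ^ 2 * (2 / c ^ 3 + 1 / (2 * c) + M / (2 * F ^ 2) + Rabs (rho 0) / (2 * F ^ 2)).
Proof.
  intros Hdec HM Hd Hdc. destruct (Hdec d Hd) as [Q HQ].
  set (q := Rabs Q + 1). exists q.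
  assert (Hq : Q < Rabs q).
  { assert (HQa := Rle_abs Q). assert (HQp := Rabs_pos Q). unfold q. rewrite Rabs_right; lra. }
  assert (F2 : 0 < F ^ 2) by (apply pow2_gt_0, F_neq0).
  assert (Idens := RInt_density_sub_inv_bound q M d HM Hdc).
  specialize (Idens ltac:(intros p Ip; destruct (HQ q p Ip Hq) as [? [? ?]]; repeat split; lra)).
  assert (Itop : Rabs (rho 0 * w q 0 ^ 2 / (2 * F ^ 2)) <= d ^ 2 * (Rabs (rho 0) / (2 * F ^ 2))).
  { destruct (HQ q 0 ltac:(unfold Icl; lra) Hq) as [Hw _].
    assert (Hw2 := pow_maj_Rabs _ _ 2 (Rlt_le _ _ Hw)).
    unfold Rdiv. rewrite !Rabs_mult, (Rabs_right (w q 0 ^ 2)) by (apply Rle_ge, pow2_ge_0).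
    rewrite (Rabs_right (/ (2 * F ^ 2))) by (apply Rle_ge; left; apply Rinv_0_lt_compat; lra).
    replace (d ^ 2 * (Rabs (rho 0) * / (2 * F ^ 2))) with (Rabs (rho 0) * d ^ 2 * / (2 * F ^ 2)) by ring.
    apply Rmult_le_compat_r; [left; apply Rinv_0_lt_compat; lra|].
    apply Rmult_le_compat_l; [apply Rabs_pos | exact Hw2]. }
  unfold flow_force.
  replace (RInt (density q) (-1) 0 - rho 0 * w q 0 ^ 2 / (2 * F ^ 2) - RInt (fun p => 1 / dI H p) (-1) 0)
    with ((RInt (density q) (-1) 0 - RInt (fun p => 1 / dI H p) (-1) 0)
          - rho 0 * w q 0 ^ 2 / (2 * F ^ 2)) by ring.
  eapply Rle_trans; [apply Rabs_triang|]. rewrite Rabs_Ropp. lra.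
Qed.

Lemma flow_force_0 : decays w -> flow_force 0 = RInt (fun p => 1 / dI H p) (-1) 0.
Proof.
  intros Hdec. destruct (cont_I_bounded _ cont_rho_p) as [M HM].
  apply Rminus_diag_uniq, (eq_0_of_small_bound _
    (2 / c ^ 3 + 1 / (2 * c) + M / (2 * F ^ 2) + Rabs (rho 0) / (2 * F ^ 2)) (Rmin 1 (c / 2))).
  { apply Rmin_glb_lt; lra. }
  intros d Hd Hd0. assert (d <= 1) by (eapply Rle_trans; [exact Hd0 | apply Rmin_l]).
  destruct (flow_force_near_trivial M d Hdec HM Hd) as [q Hq].
  { eapply Rle_trans; [exact Hd0 | apply Rmin_r]. }
  rewrite (is_derive_0_const _ is_derive_flow_force 0 q).
  assert (0 <= Rabs (flow_force q - RInt (fun p => 1 / dI H p) (-1) 0)) by apply Rabs_pos.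
  nra.
Qed.

Lemma RInt_density_0_sub_inv : (forall p, Icl p -> dq w 0 p = 0) -> (forall p, Icl p -> dI rho p <= 0) ->
  RInt (density 0) (-1) 0 - RInt (fun p => 1 / dI H p) (-1) 0 =
  1 / 2 * RInt (fun p => dp w 0 p ^ 2 / (dI H p ^ 2 * dp (hfun H w) 0 p)) (-1) 0
  - 1 / (2 * F ^ 2) * RInt (fun p => Rabs (dI rho p) * w 0 p ^ 2) (-1) 0.
Proof.
  intros Hwq0 Hrho.
  set (X := fun p => dp w 0 p ^ 2 / (dI H p ^ 2 * dp (hfun H w) 0 p)).
  set (Y := fun p => Rabs (dI rho p) * w 0 p ^ 2).
  assert (EX : ex_RInt X (-1) 0).
  { apply (ex_RInt_Icl_ext _ (fun p => dp w 0 p ^ 2 / (dI H p ^ 2 * hp 0 p))).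
    - intros p Ip. unfold X. rewrite dp_hfun by exact Ip. reflexivity.
    - apply ex_RInt_cont_I, (cont_clamped_I (fun q p => dp w q p ^ 2 / (dI H p ^ 2 * hp q p))).
      clamped_context. intros x y. unfold hp. c2d; nonzero_denominators. }
  assert (EY : ex_RInt Y (-1) 0).
  { apply (ex_RInt_Icl_ext _ (fun p => - dI rho p * w 0 p ^ 2)).
    - intros p Ip. unfold Y. rewrite Rabs_left1 by (apply Hrho, Ip). reflexivity.
    - apply ex_RInt_cont_I, (cont_clamped_I (fun q p => - dI rho p * w q p ^ 2)).
      clamped_context. intros x y. c2d. }
  assert (MD : RInt (fun p => density 0 p - 1 / dI H p) (-1) 0 =
               RInt (density 0) (-1) 0 - RInt (fun p => 1 / dI H p) (-1) 0)
    by exact (RInt_minus _ _ _ _ (ex_RInt_density 0) ex_RInt_inv_Hp).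
  rewrite <- MD, <- (RInt_scal_minus X Y) by assumption.
  apply RInt_ext. intros p Ip. rewrite Rmin_left, Rmax_right in Ip by lra.
  assert (Ip' := Icl_open p Ip).
  unfold X, Y, density. rewrite dp_hfun by exact Ip'. rewrite (Rabs_left1 _ (Hrho p Ip')).
  rewrite flow_density_sub_inv; [|exact F_neq0 | apply (Hp_pos _ _ reg), Ip' | apply (hp_neq0 0 p Ip')].
  rewrite Hwq0 by exact Ip'.
  cbn. unfold hp. field.
  split; [exact F_neq0|]. split; [apply hp_neq0, Ip' | apply Hp_neq0, Ip'].
Qed.

End FlowForce.

Lemma regular_of_inX a H w : CkaI 3 a H -> (forall p, Icl p -> 0 < dI H p) -> inX a w ->
  regular H w.
Proof.
  intros [DH [CH _]] HHp [[Dw [Cw _]] _].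
  constructor.
  - intros q p Ip. exact (proj1 (Dw nil ltac:(simpl; lia) q p Ip)).
  - intros q p Ip. exact (proj1 (Dw (true :: nil) ltac:(simpl; lia) q p Ip)).
  - intros q p Ip. exact (proj1 (Dw (false :: nil) ltac:(simpl; lia) q p Ip)).
  - intros q p Ip. exact (proj2 (Dw nil ltac:(simpl; lia) q p Ip)).
  - intros q p Ip. exact (proj2 (Dw (true :: nil) ltac:(simpl; lia) q p Ip)).
  - intros q p Ip. exact (proj2 (Dw (false :: nil) ltac:(simpl; lia) q p Ip)).
  - exact (Cw nil ltac:(simpl; lia)).
  - exact (Cw (true :: nil) ltac:(simpl; lia)).
  - exact (Cw (false :: nil) ltac:(simpl; lia)).
  - exact (Cw (true :: true :: nil) ltac:(simpl; lia)).
  - exact (Cw (true :: false :: nil) ltac:(simpl; lia)).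
  - exact (Cw (false :: true :: nil) ltac:(simpl; lia)).
  - intros p Ip. exact (DH 0%nat ltac:(lia) p Ip).
  - intros p Ip. exact (DH 1%nat ltac:(lia) p Ip).
  - exact (CH 1%nat ltac:(lia)).
  - exact HHp.
Qed.

Lemma decays_of_inX a w : inX a w -> decays w.
Proof.
  intros [_ [_ [Dec _]]] eps He.
  destruct (Dec nil ltac:(simpl; lia) eps He) as [M1 P1].
  destruct (Dec (true :: nil) ltac:(simpl; lia) eps He) as [M2 P2].
  destruct (Dec (false :: nil) ltac:(simpl; lia) eps He) as [M3 P3].
  exists (Rmax M1 (Rmax M2 M3)). intros q p Ip Hq.
  assert (M1 <= Rmax M1 (Rmax M2 M3)) by apply Rmax_l.
  assert (Rmax M2 M3 <= Rmax M1 (Rmax M2 M3)) by apply Rmax_r.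
  assert (M2 <= Rmax M2 M3) by apply Rmax_l. assert (M3 <= Rmax M2 M3) by apply Rmax_r.
  split; [|split]; [apply (P1 q p Ip) | apply (P2 q p Ip) | apply (P3 q p Ip)]; lra.
Qed.

Theorem lemma4p6 (a : R) (rho H : R -> R) (w : R -> R -> R) (F : R) :
  0 < a < 1 ->
  CkaI 2 a rho -> (forall p, Icl p -> 0 < rho p) ->
  (forall p, Icl p -> dI rho p <= 0) ->
  CkaI 3 a H -> H (-1) = 0 -> H 0 = 1 -> (forall p, Icl p -> 0 < dI H p) ->
  inX a w -> F <> 0 -> height_eq rho H w F ->
  1 / F ^ 2 * (RInt (fun p => Rabs (dI rho p) * w 0 p ^ 2) (-1) 0
               + rho 0 * w 0 0 ^ 2)
  = RInt (fun p => dp w 0 p ^ 2 / (dI H p ^ 2 * dp (hfun H w) 0 p)) (-1) 0.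
Proof.
  intros _ Crho _ Hrho CH _ H0 HHp HX HF HE.
  assert (reg := regular_of_inX a H w CH HHp HX).
  assert (Cr : cont_I (dI rho)) by exact (proj1 (proj2 Crho) 1%nat ltac:(lia)).
  pose proof HE as (_ & _ & _ & c & Hc & Hcb).
  pose proof HX as (_ & Hev & _ & Hbot).
  assert (HB := hp_lb_of_interior H w c reg Hcb).
  assert (Hwq0 : forall p, Icl p -> dq w 0 p = 0).
  { intros p Ip. apply Derive_even_0; [intros x; apply Hev, Ip | apply (ex_dq_w _ _ reg), Ip]. }
  assert (S0 := flow_force_0 rho H w F c reg Cr HF Hc HB HE H0 Hbot (decays_of_inX a w HX)).
  assert (E := RInt_density_0_sub_inv rho H w F c reg Cr HF Hc HB Hwq0 Hrho).
  unfold flow_force in S0.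
  apply (Rmult_eq_reg_l (1 / 2)); [|lra].
  replace (1 / 2 * RInt (fun p => dp w 0 p ^ 2 / (dI H p ^ 2 * dp (hfun H w) 0 p)) (-1) 0) with
    (rho 0 * w 0 0 ^ 2 / (2 * F ^ 2) + 1 / (2 * F ^ 2) * RInt (fun p => Rabs (dI rho p) * w 0 p ^ 2) (-1) 0)
    by lra.
  field. exact HF.
Qed.
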